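(* Every Hintikka formula $H$ of $\mathbf{L_1}$ satisfies $\dashv_H H$.
   Context: Formulas of $\mathbf{L_1}$: built from atomic formulas $\epsilon ab$ ($a,b$ name variables from a countably infinite list, possibly equal) with primitive connectives $\vee,\sim$; $\wedge,\supset,\equiv$ defined as usual. Disjunctions may be associated in any way. $\vdash_H A$: $A$ belongs to the smallest set containing all instances of classical propositional tautologies and all formulas $\epsilon ab\supset\epsilon aa$, $(\epsilon ab\wedge\epsilon bc)\supset\epsilon ac$, $(\epsilon ab\wedge\epsilon bb)\supset\epsilon ba$, closed under modus ponens. Positive/negative parts (occurrences): $A$ is a positive part of $A$; if $B\vee C$ is a positive part then $B,C$ are positive parts; if $\sim B$ is a positive part then $B$ is a negative part; if $\sim B$ is a negative part then $B$ is a positive part. $F[B_+,B_-]$ denotes a formula in which some formula $B$ has one occurrence as a positive part and another (non-overlapping) occurrence as a negative part. Hintikka formula: a formula $H$ such that (1) $H$ is not of the form $F[B_+,B_-]$; (2) if $B\vee C$ is a negative part of $H$ then $B$ or $C$ is; (3) if $\epsilon ab$ is a negative part then so is $\epsilon aa$; (4) if $\epsilon ab,\epsilon bc$ are negative parts then so is $\epsilon ac$; (5) if $\epsilon ab,\epsilon bb$ are negative parts then so is $\epsilon ba$. $\mathbf{HAR}$: fix a name variable $a_0$; $\dashv_H$ is the smallest set such that $\dashv_H\epsilon a_0a_0$; $\dashv_H\sim\epsilon a_0a_0$; if $\vdash_H A\supset B$ and $\dashv_H B$ then $\dashv_H A$; if $\dashv_H A$ and $A$ is obtained from $B$ by uniform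 substitution of name variables for name variables then $\dashv_H B$; if $A$ is a Hintikka formula that is a disjunction of atomic or negated atomic formulas, $\dashv_H A$, and $\epsilon ab$ is not a negative part of $A$, then $\dashv_H A\vee\epsilon ab$. *)

From Stdlib Require Import List Bool.
Import ListNotations.

Inductive form : Type :=
| Eps : nat -> nat -> form
| Or  : form -> form -> form
| Neg : form -> form.

Definition And (A B : form) : form := Neg (Or (Neg A) (Neg B)).
Definition Imp (A B : form) : form := Or (Neg A) B.
Definition Equiv (A B : form) : form := And (Imp A B) (Imp B A).

Fixpoint eval (v : nat -> nat -> bool) (A : form) : bool :=
  match A with
  | Eps a b => v a b
  | Or B C => eval v B || eval v C
  | Neg B => negb (eval v B)
  end.

(** Instances of classical propositional tautologies: formulas true under
    every truth assignment to their atomic subformulas. *)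
Definition taut (A : form) : Prop := forall v, eval v A = true.

Inductive Prov : form -> Prop :=
| Prov_taut : forall A, taut A -> Prov A
| Prov_ax1 : forall a b, Prov (Imp (Eps a b) (Eps a a))
| Prov_ax2 : forall a b c, Prov (Imp (And (Eps a b) (Eps b c)) (Eps a c))
| Prov_ax3 : forall a b, Prov (Imp (And (Eps a b) (Eps b b)) (Eps b a))
| Prov_mp : forall A B, Prov A -> Prov (Imp A B) -> Prov B.

(** Occurrences of subformulas, addressed by paths from the root. *)
Inductive step : Type := GoL | GoR | GoN.

(** [occ cur A p pol X]: starting at the root of [A] which has polarity [cur]
    (true = positive part, false = negative part), following path [p] reaches an
    occurrence of [X] which is a part of polarity [pol], according to:
    A is a positive part of A; if B \/ C is a positive part then B, C are
    positive parts; if ~B is a positive (negative) part then B is a negative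
    (positive) part. *)
Inductive occ : bool -> form -> list step -> bool -> form -> Prop :=
| occ_here : forall cur A, occ cur A [] cur A
| occ_orL : forall B C p pol X, occ true B p pol X -> occ true (Or B C) (GoL :: p) pol X
| occ_orR : forall B C p pol X, occ true C p pol X -> occ true (Or B C) (GoR :: p) pol X
| occ_neg : forall cur B p pol X, occ (negb cur) B p pol X -> occ cur (Neg B) (GoN :: p) pol X.

Definition pospart (H B : form) : Prop := exists p, occ true H p true B.
Definition negpart (H B : form) : Prop := exists p, occ true H p false B.

Definition is_prefix (p q : list step) : Prop := exists r, q = p ++ r.

(** [H] is of the form F[B_+, B_-]: some formula B has an occurrence as a
    positive part and another, non-overlapping occurrence as a negative part. *)
Definition has_pos_neg (H : form) : Prop :=
  exists B p q, occ true H p true B /\ occ true H q false B /\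
                ~ is_prefix p q /\ ~ is_prefix q p.

Definition Hintikka (H : form) : Prop :=
  ~ has_pos_neg H /\
  (forall B C, negpart H (Or B C) -> negpart H B \/ negpart H C) /\
  (forall a b, negpart H (Eps a b) -> negpart H (Eps a a)) /\
  (forall a b c, negpart H (Eps a b) -> negpart H (Eps b c) -> negpart H (Eps a c)) /\
  (forall a b, negpart H (Eps a b) -> negpart H (Eps b b) -> negpart H (Eps b a)).

Inductive lit_disj : form -> Prop :=
| ld_atom : forall a b, lit_disj (Eps a b)
| ld_natom : forall a b, lit_disj (Neg (Eps a b))
| ld_or : forall A B, lit_disj A -> lit_disj B -> lit_disj (Or A B).

Fixpoint subst (s : nat -> nat) (A : form) : form :=
  match A with
  | Eps a b => Eps (s a) (s b)
  | Or B C => Or (subst s B) (subst s C)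
  | Neg B => Neg (subst s B)
  end.

Inductive Ref (a0 : nat) : form -> Prop :=
| Ref_ax1 : Ref a0 (Eps a0 a0)
| Ref_ax2 : Ref a0 (Neg (Eps a0 a0))
| Ref_mp : forall A B, Prov (Imp A B) -> Ref a0 B -> Ref a0 A
| Ref_subst : forall A B (s : nat -> nat), Ref a0 A -> A = subst s B -> Ref a0 B
| Ref_ext : forall A a b, Hintikka A -> lit_disj A -> Ref a0 A ->
    ~ negpart A (Eps a b) -> Ref a0 (Or A (Eps a b)).

(** Let [H] be a Hintikka formula.  Collect the atomic parts of [H] with their
    polarity: [Ns] lists the pairs [(a,b)] such that [Eps a b] is a negative
    part of [H], [Ps] those for which it is a positive part.
    - The Hintikka conditions (3)-(5) say that [Ns] is closed under the three
      rules of the axioms of |-_H; condition (1) makes [Ns] and [Ps] disjoint;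
      condition (2) makes at least one of them nonempty.
    - The clause [L = ~N1 \/ ... \/ ~Nk \/ P1 \/ ... \/ Pm] is then refutable:
      its negative part collapses, by substituting [a0] for every name, to a
      disjunction implied by [~ Eps a0 a0] (or, when [Ns] is empty, its first
      atom is a substitution instance of [Eps a0 a0]); the positive literals
      are then added one at a time by the last rule of HAR, every intermediate
      clause being a Hintikka literal disjunction.
    - Finally [H -> L] is a tautology: a valuation falsifying [L] falsifies
      every atomic part of [H] according to its polarity, and condition (2)
      propagates this to all parts of [H], in particular to [H] itself.
    Hence [H] is refuted by the modus-ponens rule of HAR. *)

From Stdlib Require Import List Bool.
Import ListNotations.

(** [signed_atoms cur A] lists the atomic parts [(pol, (a,b))] of [A], where
    [A] itself is considered a part of polarity [cur]; a disjunction is only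
    decomposed when it is a positive part, exactly as in the definition of
    parts. *)
Fixpoint signed_atoms (cur : bool) (A : form) : list (bool * (nat * nat)) :=
  match A with
  | Eps a b => [(cur, (a, b))]
  | Or B C => if cur then signed_atoms true B ++ signed_atoms true C else []
  | Neg B => signed_atoms (negb cur) B
  end.

Lemma signed_atoms_occ (A : form) (cur pol : bool) (a b : nat) :
  In (pol, (a, b)) (signed_atoms cur A) <-> exists p, occ cur A p pol (Eps a b).
Proof.
  split.
  - revert cur. induction A as [a' b'|B IHB C IHC|B IHB]; intros cur; simpl.
    + intros [Heq|[]]. inversion Heq; subst. exists []. constructor.
    + destruct cur; [|intros []]. rewrite in_app_iff. intros [Hi|Hi].
      * destruct (IHB _ Hi) as [p Hp]. exists (GoL :: p). now constructor.
      * destruct (IHC _ Hi) as [p Hp]. exists (GoR :: p). now constructor.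
    + intros Hi. destruct (IHB _ Hi) as [p Hp]. exists (GoN :: p). now constructor.
  - intros [p Hp]. remember (Eps a b) as X eqn:HX.
    induction Hp; subst; simpl; auto using in_or_app.
Qed.

Lemma negpart_atom_iff (A : form) (a b : nat) :
  negpart A (Eps a b) <-> In (false, (a, b)) (signed_atoms true A).
Proof. unfold negpart. now rewrite signed_atoms_occ. Qed.

Fixpoint atoms_of_sign (pol : bool) (l : list (bool * (nat * nat))) : list (nat * nat) :=
  match l with
  | [] => []
  | (p, x) :: r => if Bool.eqb p pol then x :: atoms_of_sign pol r else atoms_of_sign pol r
  end.

Lemma atoms_of_sign_In (pol : bool) (l : list (bool * (nat * nat))) (x : nat * nat) :
  In x (atoms_of_sign pol l) <-> In (pol, x) l.
Proof.
  induction l as [|[p y] r IH]; simpl; [tauto|].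
  destruct p, pol; simpl; rewrite IH; intuition congruence.
Qed.

Lemma occ_app (cur : bool) (A : form) (p : list step) (pol : bool) (X : form) :
  occ cur A p pol X ->
  forall q pol' Y, occ pol X q pol' Y -> occ cur A (p ++ q) pol' Y.
Proof. intros Hp; induction Hp; intros q pol' Y HY; simpl; auto; constructor; auto. Qed.

Lemma occ_app_inv (p : list step) : forall cur A r pol X,
  occ cur A (p ++ r) pol X -> exists pol' Y, occ cur A p pol' Y /\ occ pol' Y r pol X.
Proof.
  induction p as [|s p IHp]; intros cur A r pol X Hocc; simpl in *.
  - exists cur, A. split; [constructor | exact Hocc].
  - inversion Hocc; subst;
      match goal with Hh : occ _ _ (p ++ r) _ _ |- _ =>
        destruct (IHp _ _ _ _ _ Hh) as [pol' [Y [H1 H2]]] end;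
      exists pol', Y; split; auto; constructor; exact H1.
Qed.

Lemma occ_det (cur : bool) (A : form) (p : list step) (pol : bool) (X : form) :
  occ cur A p pol X -> forall pol' X', occ cur A p pol' X' -> pol = pol' /\ X = X'.
Proof. intros Hp; induction Hp; intros pol' X' H'; inversion H'; subst; eauto. Qed.

(** An atom reached by one path cannot be reached with the opposite polarity by
    an extension of that path: atoms have no proper parts. *)
Lemma occ_atom_not_prefix (A : form) (p q : list step) (a b : nat) (pol : bool) :
  occ true A p pol (Eps a b) -> occ true A q (negb pol) (Eps a b) -> ~ is_prefix p q.
Proof.
  intros Hp Hq [r ->].
  destruct (occ_app_inv _ _ _ _ _ _ Hq) as [pol' [Y [HY Hr]]].
  destruct (occ_det _ _ _ _ _ Hp _ _ HY) as [<- <-].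
  inversion Hr; subst. now destruct pol.
Qed.

Lemma no_pos_neg_atom (H : form) (a b : nat) :
  ~ has_pos_neg H -> In (true, (a, b)) (signed_atoms true H) ->
  ~ In (false, (a, b)) (signed_atoms true H).
Proof.
  intros Hnot Hpos Hneg.
  apply signed_atoms_occ in Hpos as [p Hp]. apply signed_atoms_occ in Hneg as [q Hq].
  apply Hnot. exists (Eps a b), p, q. repeat split; auto.
  - exact (occ_atom_not_prefix _ _ _ _ _ true Hp Hq).
  - exact (occ_atom_not_prefix _ _ _ _ _ false Hq Hp).
Qed.

Definition neg_or_closed (H : form) : Prop :=
  forall B C, negpart H (Or B C) -> negpart H B \/ negpart H C.

(** Under condition (2) the decomposition of parts always reaches an atom, so
    [H] has at least one signed atomic part. *)
Lemma signed_atoms_nonempty (H : form) :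
  neg_or_closed H -> exists t, In t (signed_atoms true H).
Proof.
  intros Hor.
  enough (Hex : forall X p pol, occ true H p pol X ->
            exists q pol' a b, occ true H q pol' (Eps a b)).
  { destruct (Hex H [] true (occ_here _ _)) as [q [pol [a [b Hq]]]].
    exists (pol, (a, b)). apply signed_atoms_occ. eauto. }
  induction X as [a b|X1 IH1 X2 IH2|X IH]; intros p pol Hocc; eauto.
  - destruct pol.
    + apply (IH1 (p ++ [GoL]) true). eapply occ_app; [exact Hocc | repeat constructor].
    + destruct (Hor X1 X2 (ex_intro _ p Hocc)) as [[q Hq]|[q Hq]]; eauto.
  - apply (IH (p ++ [GoN]) (negb pol)).
    eapply occ_app; [exact Hocc | apply occ_neg; constructor].
Qed.

Lemma refuted_atoms (v : nat -> nat -> bool) (A : form) : forall cur,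
  eval v A = negb cur ->
  forall pol a b, In (pol, (a, b)) (signed_atoms cur A) -> v a b = negb pol.
Proof.
  induction A as [a' b'|B IHB C IHC|B IHB]; intros cur He pol a b Hin; simpl in *.
  - destruct Hin as [Heq|[]]. inversion Heq; subst. exact He.
  - destruct cur; [|contradiction]. apply orb_false_elim in He as [HB HC].
    apply in_app_iff in Hin as [Hi|Hi]; [apply (IHB true) | apply (IHC true)]; auto.
  - apply (IHB (negb cur)); auto. destruct (eval v B), cur; simpl in *; congruence.
Qed.

Lemma refuted_parts (v : nat -> nat -> bool) (H : form) :
  neg_or_closed H ->
  (forall pol a b, In (pol, (a, b)) (signed_atoms true H) -> v a b = negb pol) ->
  forall X p pol, occ true H p pol X -> eval v X = negb pol.
Proof.
  intros Hor Hat X. induction X as [a b|X1 IH1 X2 IH2|X IH]; intros p pol Hocc; simpl.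
  - apply Hat, signed_atoms_occ. now exists p.
  - destruct pol.
    + rewrite (IH1 (p ++ [GoL]) true), (IH2 (p ++ [GoR]) true); auto;
        eapply occ_app; try exact Hocc; repeat constructor.
    + destruct (Hor X1 X2 (ex_intro _ p Hocc)) as [[q Hq]|[q Hq]].
      * now rewrite (IH1 q false Hq).
      * rewrite (IH2 q false Hq). apply orb_true_r.
  - rewrite (IH (p ++ [GoN]) (negb pol)).
    + now destruct pol.
    + eapply occ_app; [exact Hocc | apply occ_neg; constructor].
Qed.

Lemma prov_imp_of_atoms (H L : form) :
  neg_or_closed H ->
  (forall t, In t (signed_atoms true H) -> In t (signed_atoms true L)) ->
  Prov (Imp H L).
Proof.
  intros Hor Hsub. apply Prov_taut. intros v. simpl.
  destruct (eval v L) eqn:EL; [apply orb_true_r|]. rewrite orb_false_r.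
  erewrite (refuted_parts v H Hor) with (p := []) (pol := true); [reflexivity | | constructor].
  intros pol a b Hi. exact (refuted_atoms v L true EL pol a b (Hsub _ Hi)).
Qed.

Definition atom (x : nat * nat) : form := Eps (fst x) (snd x).
Definition natom (x : nat * nat) : form := Neg (atom x).

Fixpoint or_list (ls : list form) (A : form) : form :=
  match ls with [] => A | l :: r => or_list r (Or A l) end.

Lemma signed_atoms_or_list (ls : list form) : forall A,
  signed_atoms true (or_list ls A) = signed_atoms true A ++ flat_map (signed_atoms true) ls.
Proof.
  induction ls as [|l r IH]; intros A; simpl; [now rewrite app_nil_r|].
  rewrite IH. simpl. now rewrite app_assoc.
Qed.

Lemma subst_or_list (s : nat -> nat) (ls : list form) : forall A,
  subst s (or_list ls A) = or_list (map (subst s) ls) (subst s A).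
Proof. induction ls as [|l r IH]; intros A; simpl; [reflexivity | now rewrite IH]. Qed.

Lemma lit_disj_or_list (ls : list form) : forall A,
  lit_disj A -> (forall l, In l ls -> lit_disj l) -> lit_disj (or_list ls A).
Proof.
  induction ls as [|l r IH]; intros A HA Hl; simpl; auto.
  apply IH; [constructor|]; auto using in_eq, in_cons.
Qed.

Lemma signed_atoms_atoms (pol : bool) (l : list (nat * nat)) (t : bool * (nat * nat)) :
  In t (flat_map (signed_atoms true) (map (fun x => if pol then atom x else natom x) l))
  <-> exists x, t = (pol, x) /\ In x l.
Proof.
  induction l as [|[a b] r IH]; simpl; [split; [tauto | intros [x [_ []]]]|].
  rewrite in_app_iff, IH. destruct pol; simpl; split.
  all: first [ intros [[H|[]]|[x [H1 H2]]]; subst; eauto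
             | intros [x [H1 [H2|H2]]]; subst; eauto ].
Qed.

Lemma signed_atoms_pos (l : list (nat * nat)) (t : bool * (nat * nat)) :
  In t (flat_map (signed_atoms true) (map atom l)) <-> exists x, t = (true, x) /\ In x l.
Proof. exact (signed_atoms_atoms true l t). Qed.

Lemma signed_atoms_neg (l : list (nat * nat)) (t : bool * (nat * nat)) :
  In t (flat_map (signed_atoms true) (map natom l)) <-> exists x, t = (false, x) /\ In x l.
Proof. exact (signed_atoms_atoms false l t). Qed.

(** Substituting [a0] for every name turns a clause of negated atoms into a
    disjunction of copies of [~ Eps a0 a0]; when [Eps a0 a0] is true every
    further disjunct is false. *)
Lemma eval_collapsed_natoms (v : nat -> nat -> bool) (a0 : nat) :
  v a0 a0 = true -> forall ns A,
  eval v (subst (fun _ => a0) (or_list (map natom ns) A)) = eval v (subst (fun _ => a0) A).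
Proof.
  intros Hv ns. induction ns as [|x ns IH]; intros A; simpl; [reflexivity|].
  rewrite IH. simpl. rewrite Hv. apply orb_false_r.
Qed.

Lemma ref_neg_clause (a0 : nat) (n0 : nat * nat) (ns : list (nat * nat)) :
  Ref a0 (or_list (map natom ns) (natom n0)).
Proof.
  apply (Ref_subst a0 (subst (fun _ => a0) (or_list (map natom ns) (natom n0))) _
           (fun _ => a0)); [|reflexivity].
  apply Ref_mp with (B := Neg (Eps a0 a0)); [|apply Ref_ax2].
  apply Prov_taut. intros v. simpl.
  destruct (v a0 a0) eqn:Ev; simpl; [|apply orb_true_r].
  rewrite (eval_collapsed_natoms v a0 Ev). simpl. now rewrite Ev.
Qed.

(** A single atom is refutable, being a substitution instance of [Eps a0 a0]. *)
Lemma ref_atom (a0 : nat) (x : nat * nat) : Ref a0 (atom x).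
Proof. apply (Ref_subst a0 (Eps a0 a0) _ (fun _ => a0)); [constructor | reflexivity]. Qed.

Section ClosedNegatives.

(** The names of the intended negative literals, closed under the three rules
    mirrored by the Hintikka conditions (3)-(5). *)
Variable Ns : list (nat * nat).
Hypothesis Ns_refl : forall a b, In (a, b) Ns -> In (a, a) Ns.
Hypothesis Ns_trans : forall a b c, In (a, b) Ns -> In (b, c) Ns -> In (a, c) Ns.
Hypothesis Ns_sym : forall a b, In (a, b) Ns -> In (b, b) Ns -> In (b, a) Ns.

Lemma lit_disj_Hintikka (A : form) :
  lit_disj A ->
  (forall x, In (false, x) (signed_atoms true A) <-> In x Ns) ->
  (forall x, In (true, x) (signed_atoms true A) -> ~ In x Ns) -> Hintikka A.
Proof.
  intros HA Hneg Hpos.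
  assert (Hnegatom : forall p B, occ true A p false B -> exists a b, B = Eps a b).
  { clear - HA. induction HA as [a b|a b|A1 A2 _ IH1 _ IH2]; intros p B Hp.
    - inversion Hp.
    - inversion Hp; subst.
      match goal with Hh : occ _ (Eps _ _) _ _ _ |- _ => inversion Hh; subst end. eauto.
    - inversion Hp; subst; eauto. }
  repeat split.
  - intros [B [p [q [Hp [Hq _]]]]]. destruct (Hnegatom q B Hq) as [a [b ->]].
    apply (Hpos (a, b)); [|apply Hneg]; apply signed_atoms_occ; eauto.
  - intros B C [p Hp]. destruct (Hnegatom p _ Hp) as [a [b Hb]]. discriminate.
  - intros a b. rewrite !negpart_atom_iff, !Hneg. apply Ns_refl.
  - intros a b c. rewrite !negpart_atom_iff, !Hneg. apply Ns_trans.
  - intros a b. rewrite !negpart_atom_iff, !Hneg. apply Ns_sym.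
Qed.

Lemma ref_add_positives (a0 : nat) (ps : list (nat * nat)) : forall A,
  lit_disj A -> Ref a0 A ->
  (forall x, In (false, x) (signed_atoms true A) <-> In x Ns) ->
  (forall x, In (true, x) (signed_atoms true A) -> ~ In x Ns) ->
  (forall x, In x ps -> ~ In x Ns) ->
  Ref a0 (or_list (map atom ps) A).
Proof.
  induction ps as [|[a b] ps IH]; intros A HA HR Hneg Hpos Hps; simpl; auto.
  assert (Hab : ~ In (a, b) Ns) by (apply Hps; left; reflexivity).
  apply IH.
  - repeat constructor; assumption.
  - apply Ref_ext; auto using lit_disj_Hintikka.
    rewrite negpart_atom_iff, Hneg. exact Hab.
  - intros x. simpl. rewrite in_app_iff, <- Hneg. simpl. intuition discriminate.
  - intros x. simpl. rewrite in_app_iff. simpl. intros [Hx|[Hx|[]]]; auto.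
    now inversion Hx; subst.
  - intros x Hx. apply Hps. now right.
Qed.

Lemma refutable_clause (a0 : nat) (Ps : list (nat * nat)) :
  (forall x, In x Ps -> ~ In x Ns) -> Ns ++ Ps <> [] ->
  exists L, Ref a0 L /\
    (forall x, In x Ns -> In (false, x) (signed_atoms true L)) /\
    (forall x, In x Ps -> In (true, x) (signed_atoms true L)).
Proof.
  intros Hdisj Hne.
  assert (Hbase : exists A, lit_disj A /\ Ref a0 A /\
            (forall x, In (false, x) (signed_atoms true A) <-> In x Ns) /\
            (forall x, In (true, x) (signed_atoms true A) -> In x Ps)).
  { destruct Ns as [|[c d] ns] eqn:ENs; [destruct Ps as [|[c d] ps]; [contradiction|]|].
    - exists (atom (c, d)). split; [|split; [|split]].
      + constructor.
      + apply ref_atom.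
      + intros x. simpl. split; [intros [Hx|[]]; discriminate | intros []].
      + simpl. intros x [Hx|[]]. inversion Hx. now left.
    - exists (or_list (map natom ns) (natom (c, d))). split; [|split; [|split]].
      + apply lit_disj_or_list; [constructor|].
        intros l Hl. apply in_map_iff in Hl as [x [<- _]]. constructor.
      + apply ref_neg_clause.
      + intros x. rewrite signed_atoms_or_list, in_app_iff, signed_atoms_neg. simpl. split.
        * intros [[Hx|[]]|[y [Hy1 Hy2]]]; [left; congruence | right; congruence].
        * intros [Hx|Hx]; [left; left; congruence | right; eauto].
      + intros x. rewrite signed_atoms_or_list, in_app_iff, signed_atoms_neg. simpl.
        intros [[Hx|[]]|[y [Hy1 _]]]; discriminate. }
  destruct Hbase as [A [HA [HR [Hneg Hpos]]]].
  exists (or_list (map atom Ps) A). split; [|split].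
  - apply ref_add_positives; auto.
  - intros x Hx. rewrite signed_atoms_or_list, in_app_iff. left. now apply Hneg.
  - intros x Hx. rewrite signed_atoms_or_list, in_app_iff, signed_atoms_pos. eauto.
Qed.

End ClosedNegatives.

Theorem theorem3p1 : forall (a0 : nat) (H : form), Hintikka H -> Ref a0 H.
Proof.
  intros a0 H [Hnot [Hor [Hrefl [Htrans Hsym]]]].
  set (Ns := atoms_of_sign false (signed_atoms true H)).
  set (Ps := atoms_of_sign true (signed_atoms true H)).
  assert (HN : forall a b, negpart H (Eps a b) <-> In (a, b) Ns).
  { intros a b. unfold Ns. now rewrite atoms_of_sign_In, negpart_atom_iff. }
  assert (Hdisj : forall x, In x Ps -> ~ In x Ns).
  { intros [a b]. unfold Ps, Ns. rewrite !atoms_of_sign_In. now apply no_pos_neg_atom. }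
  assert (Hne : Ns ++ Ps <> []).
  { destruct (signed_atoms_nonempty H Hor) as [[[|] x] Hx]; intros Hnil;
      apply app_eq_nil in Hnil as [HNs HPs].
    - assert (Hin : In x Ps) by (apply atoms_of_sign_In; exact Hx). now rewrite HPs in Hin.
    - assert (Hin : In x Ns) by (apply atoms_of_sign_In; exact Hx). now rewrite HNs in Hin. }
  destruct (refutable_clause Ns) with (a0 := a0) (Ps := Ps) as [L [HL [HLneg HLpos]]];
    [intros a b; rewrite <- !HN; apply Hrefl | intros a b c; rewrite <- !HN; apply Htrans
    | intros a b; rewrite <- !HN; apply Hsym | exact Hdisj | exact Hne |].
  apply Ref_mp with (B := L); [|exact HL].
  apply prov_imp_of_atoms; [exact Hor|].
  intros [[|] x] Hx.
  - apply HLpos. now apply atoms_of_sign_In.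
  - apply HLneg. now apply atoms_of_sign_In.
Qed.
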